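(* Let $\epsilon$ be real and, for $i=1,2,3$, let $\alpha_i,\beta_i,\eta_i$ be real constants with $\beta_i^2=e^{\alpha_i\epsilon}+e^{-\alpha_i\epsilon}-2$. Assume $P(p_i+p_j)\neq0$ for $i<j$ and set $A(i,j)=-\dfrac{P(p_i-p_j)}{P(p_i+p_j)}$. Then $$f(x,t)=1+\sum_{i=1}^3 e^{\theta_i}+\sum_{1\le i<j\le 3}A(i,j)e^{\theta_i+\theta_j}+A(1,2)A(1,3)A(2,3)\,e^{\theta_1+\theta_2+\theta_3},\qquad \theta_i=-\frac{\alpha_i}{x}+\beta_i t+\eta_i,$$ satisfies the bilinear generalized $q$-Toda equation $\big[D_t^2-\big(e^{\epsilon x^2D_x}+e^{-\epsilon x^2 D_x}-2\big)\big]f\cdot f=0$.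
   Context: Hirota operators: $P(D_x,D_t)\,f\cdot g := P(\partial_x-\partial_{x'},\partial_t-\partial_{t'})f(x,t)g(x',t')|_{x'=x,t'=t}$; $e^{\pm\epsilon x^2 D_x} f\cdot g$ means $f\!\left(\frac{x}{1\mp\epsilon x}\right)g\!\left(\frac{x}{1\pm\epsilon x}\right)$. For a vector $p=(\beta,\alpha,\eta)$ define $P(p)=\beta^2-\big(e^{\alpha\epsilon}+e^{-\alpha\epsilon}-2\big)$, and $p_i=(\beta_i,\alpha_i,\eta_i)$ with componentwise sums and differences. *)

From Stdlib Require Import Reals.
Open Scope R_scope.

Definition vec := (R * R * R)%type.
Definition vbeta (p : vec) : R := fst (fst p).
Definition valpha (p : vec) : R := snd (fst p).
Definition veta (p : vec) : R := snd p.
Definition vadd (p q : vec) : vec :=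
  (vbeta p + vbeta q, valpha p + valpha q, veta p + veta q).
Definition vsub (p q : vec) : vec :=
  (vbeta p - vbeta q, valpha p - valpha q, veta p - veta q).

Definition Ppoly (eps : R) (p : vec) : R :=
  (vbeta p)^2 - (exp (valpha p * eps) + exp (- (valpha p * eps)) - 2).

Definition Acoef (eps : R) (pi pj : vec) : R :=
  - (Ppoly eps (vsub pi pj) / Ppoly eps (vadd pi pj)).

Definition theta (p : vec) (x t : R) : R :=
  - (valpha p / x) + vbeta p * t + veta p.

Definition f3 (eps : R) (p1 p2 p3 : vec) (x t : R) : R :=
  1 + exp (theta p1 x t) + exp (theta p2 x t) + exp (theta p3 x t)
  + Acoef eps p1 p2 * exp (theta p1 x t + theta p2 x t)
  + Acoef eps p1 p3 * exp (theta p1 x t + theta p3 x t)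
  + Acoef eps p2 p3 * exp (theta p2 x t + theta p3 x t)
  + Acoef eps p1 p2 * Acoef eps p1 p3 * Acoef eps p2 p3
      * exp (theta p1 x t + theta p2 x t + theta p3 x t).

(* D_t^2 g.h at t, written out: g'' h - 2 g' h' + g h'' , given the
   t-derivatives g1,g2 of g and h1,h2 of h. *)
Definition hirota_Dt2 (g g1 g2 h h1 h2 : R -> R) (t : R) : R :=
  g2 t * h t - 2 * (g1 t * h1 t) + g t * h2 t.

(* e^{+eps x^2 D_x} g.h = g(x/(1-eps x)) h(x/(1+eps x)) *)
Definition qshift_plus (eps : R) (g h : R -> R -> R) (x t : R) : R :=
  g (x / (1 - eps * x)) t * h (x / (1 + eps * x)) t.
(* e^{-eps x^2 D_x} g.h = g(x/(1+eps x)) h(x/(1-eps x)) *)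
Definition qshift_minus (eps : R) (g h : R -> R -> R) (x t : R) : R :=
  g (x / (1 + eps * x)) t * h (x / (1 - eps * x)) t.

(* Bilinear generalized q-Toda:
   [D_t^2 - (e^{eps x^2 D_x} + e^{-eps x^2 D_x} - 2)] f.f at (x,t),
   where ft, ftt are the first and second t-derivatives of f(x, .). *)
Definition qToda_bilinear (eps : R) (f : R -> R -> R) (ft ftt : R -> R)
    (x t : R) : R :=
  hirota_Dt2 (f x) ft ftt (f x) ft ftt t
  - (qshift_plus eps f f x t + qshift_minus eps f f x t - 2 * (f x t * f x t)).

(** Write [u_i = e^(alpha_i eps)] and [E_i = e^(theta_i)].  Each [E_i] is an
    eigenfunction of [d/dt] (eigenvalue [beta_i]) and of the two q-shifts
    (eigenvalues [u_i], [1/u_i]), so the bilinear form of [f = sum_S c_S E_S]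
    is [sum_(S,T) c_S c_T P(p_S - p_T) E_S E_T], where
    [P(b, u) = b^2 - (u + 1/u - 2)].  Collecting monomials, every coefficient
    is a multiple of [P(p_i)] (dispersion relation), of
    [A(i,j) P(p_i + p_j) + P(p_i - p_j)] (definition of [A]), or of the
    coefficient of [E_1 E_2 E_3].  For the latter, the dispersion relation is
    parametrised by [u = w^2], [beta = w - 1/w]; then
    [A(i,j) = ((w_i - w_j) / (1 - w_i w_j))^2] and the three-soliton condition
    becomes a rational identity in [w_1, w_2, w_3]. *)

From Stdlib Require Import Reals Lra Field FunctionalExtensionality.
From Coquelicot Require Import Coquelicot.
Open Scope R_scope.

Definition disp (b u : R) : R := b ^ 2 - (u + / u - 2).

Definition phase_shift (b1 u1 b2 u2 : R) : R :=
  - (disp (b1 - b2) (u1 / u2) / disp (b1 + b2) (u1 * u2)).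

Definition pair_defect (b1 u1 b2 u2 c : R) : R :=
  c * disp (b1 + b2) (u1 * u2) + disp (b1 - b2) (u1 / u2).

Definition triple_defect (b1 b2 b3 u1 u2 u3 c12 c13 c23 : R) : R :=
  c12 * c13 * c23 * disp (b1 + b2 + b3) (u1 * u2 * u3)
  + c23 * disp (b1 - (b2 + b3)) (u1 / (u2 * u3))
  + c13 * disp (b2 - (b1 + b3)) (u2 / (u1 * u3))
  + c12 * disp (b3 - (b1 + b2)) (u3 / (u1 * u2)).

(* [k]-th time derivative of the three-soliton tau function; the constant term
   [0 ^ k] is the empty subset, whose rate is [0]. *)
Definition soliton3 (k : nat) (b1 b2 b3 c12 c13 c23 E1 E2 E3 : R) : R :=
  0 ^ k + b1 ^ k * E1 + b2 ^ k * E2 + b3 ^ k * E3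
  + c12 * (b1 + b2) ^ k * (E1 * E2) + c13 * (b1 + b3) ^ k * (E1 * E3)
  + c23 * (b2 + b3) ^ k * (E2 * E3)
  + c12 * c13 * c23 * (b1 + b2 + b3) ^ k * (E1 * E2 * E3).

Definition hirota3 (b1 b2 b3 u1 u2 u3 c12 c13 c23 E1 E2 E3 : R) : R :=
  let F k := soliton3 k b1 b2 b3 c12 c13 c23 in
  F 2%nat E1 E2 E3 * F 0%nat E1 E2 E3
  - 2 * (F 1%nat E1 E2 E3 * F 1%nat E1 E2 E3)
  + F 0%nat E1 E2 E3 * F 2%nat E1 E2 E3
  - (F 0%nat (E1 * u1) (E2 * u2) (E3 * u3) * F 0%nat (E1 / u1) (E2 / u2) (E3 / u3)
     + F 0%nat (E1 / u1) (E2 / u2) (E3 / u3) * F 0%nat (E1 * u1) (E2 * u2) (E3 * u3)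
     - 2 * (F 0%nat E1 E2 E3 * F 0%nat E1 E2 E3)).

Lemma hirota3_expand (b1 b2 b3 u1 u2 u3 c12 c13 c23 E1 E2 E3 : R) :
  u1 <> 0 -> u2 <> 0 -> u3 <> 0 ->
  hirota3 b1 b2 b3 u1 u2 u3 c12 c13 c23 E1 E2 E3 = 2 * (
    disp b1 u1 * E1 + disp b2 u2 * E2 + disp b3 u3 * E3
    + pair_defect b1 u1 b2 u2 c12 * (E1 * E2)
    + pair_defect b1 u1 b3 u3 c13 * (E1 * E3)
    + pair_defect b2 u2 b3 u3 c23 * (E2 * E3)
    + c12 * (disp b2 u2 * E1 + disp b1 u1 * E2) * (E1 * E2)
    + c13 * (disp b3 u3 * E1 + disp b1 u1 * E3) * (E1 * E3)
    + c23 * (disp b3 u3 * E2 + disp b2 u2 * E3) * (E2 * E3)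
    + triple_defect b1 b2 b3 u1 u2 u3 c12 c13 c23 * (E1 * E2 * E3)
    + (c12 * c13 * pair_defect b2 u2 b3 u3 c23 * E1
       + c12 * c23 * pair_defect b1 u1 b3 u3 c13 * E2
       + c13 * c23 * pair_defect b1 u1 b2 u2 c12 * E3) * (E1 * E2 * E3)
    + c12 * c13 * c23 * (c23 * disp b1 u1 * (E2 * E3) + c13 * disp b2 u2 * (E1 * E3)
       + c12 * disp b3 u3 * (E1 * E2)) * (E1 * E2 * E3)).
Proof.
  intros. unfold hirota3, soliton3, triple_defect, pair_defect, disp; simpl.
  field; auto.
Qed.

Lemma hirota3_eq0 (b1 b2 b3 u1 u2 u3 c12 c13 c23 E1 E2 E3 : R) :
  u1 <> 0 -> u2 <> 0 -> u3 <> 0 ->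
  disp b1 u1 = 0 -> disp b2 u2 = 0 -> disp b3 u3 = 0 ->
  pair_defect b1 u1 b2 u2 c12 = 0 -> pair_defect b1 u1 b3 u3 c13 = 0 ->
  pair_defect b2 u2 b3 u3 c23 = 0 ->
  triple_defect b1 b2 b3 u1 u2 u3 c12 c13 c23 = 0 ->
  hirota3 b1 b2 b3 u1 u2 u3 c12 c13 c23 E1 E2 E3 = 0.
Proof.
  intros U1 U2 U3 D1 D2 D3 P12 P13 P23 T.
  rewrite hirota3_expand, D1, D2, D3, P12, P13, P23, T by assumption.
  ring.
Qed.

Lemma pair_defect_phase_shift (b1 u1 b2 u2 : R) :
  disp (b1 + b2) (u1 * u2) <> 0 ->
  pair_defect b1 u1 b2 u2 (phase_shift b1 u1 b2 u2) = 0.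
Proof. intros. unfold pair_defect, phase_shift. field. assumption. Qed.

Lemma disp_eq0_param (b u : R) : 0 < u -> disp b u = 0 ->
  exists w, w <> 0 /\ b = w - / w /\ u = w * w.
Proof.
  intros Hu Hb.
  pose proof (sqrt_lt_R0 u Hu) as Hs.
  pose proof (sqrt_sqrt u (Rlt_le 0 u Hu)) as Hss.
  set (s := sqrt u) in *.
  assert (Hsq : (b - (s - / s)) * (b + (s - / s)) = 0).
  { unfold disp in Hb. rewrite <- Hss in Hb.
    replace ((b - (s - / s)) * (b + (s - / s))) with
      (b ^ 2 - (s * s + / (s * s) - 2)) by (field; lra).
    exact Hb. }
  destruct (Rmult_integral _ _ Hsq) as [E | E].
  - exists s. repeat split; lra.
  - exists (- s). repeat split.
    + lra.
    + replace (- s - / - s) with (- (s - / s)) by (field; lra). lra.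
    + rewrite <- Hss. ring.
Qed.

Lemma disp_add_param (a b : R) : a <> 0 -> b <> 0 ->
  disp ((a - / a) + (b - / b)) ((a * a) * (b * b))
  = - ((a ^ 2 - 1) * (b ^ 2 - 1) * ((1 - a * b) / (a * b)) ^ 2).
Proof. intros. unfold disp. field. auto. Qed.

Lemma disp_sub_param (a b : R) : a <> 0 -> b <> 0 ->
  disp ((a - / a) - (b - / b)) ((a * a) / (b * b))
  = (a ^ 2 - 1) * (b ^ 2 - 1) * ((a - b) / (a * b)) ^ 2.
Proof. intros. unfold disp. field. auto. Qed.

Lemma phase_shift_param (a b : R) : a <> 0 -> b <> 0 ->
  disp ((a - / a) + (b - / b)) ((a * a) * (b * b)) <> 0 ->
  1 - a * b <> 0 /\
  phase_shift (a - / a) (a * a) (b - / b) (b * b) = ((a - b) / (1 - a * b)) ^ 2.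
Proof.
  intros Ha Hb Hd.
  rewrite disp_add_param in Hd by assumption.
  assert (Hab : 1 - a * b <> 0).
  { intro E. apply Hd. rewrite E. unfold Rdiv. ring. }
  split; [exact Hab |].
  assert (Ha2 : a ^ 2 - 1 <> 0) by (intro E; apply Hd; rewrite E; ring).
  assert (Hb2 : b ^ 2 - 1 <> 0) by (intro E; apply Hd; rewrite E; ring).
  unfold phase_shift. rewrite disp_add_param, disp_sub_param by assumption.
  field. auto.
Qed.

Lemma triple_defect_param (w1 w2 w3 : R) :
  w1 <> 0 -> w2 <> 0 -> w3 <> 0 ->
  1 - w1 * w2 <> 0 -> 1 - w1 * w3 <> 0 -> 1 - w2 * w3 <> 0 ->
  triple_defect (w1 - / w1) (w2 - / w2) (w3 - / w3) (w1 * w1) (w2 * w2) (w3 * w3)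
    (((w1 - w2) / (1 - w1 * w2)) ^ 2) (((w1 - w3) / (1 - w1 * w3)) ^ 2)
    (((w2 - w3) / (1 - w2 * w3)) ^ 2) = 0.
Proof. intros. unfold triple_defect, disp. field. repeat split; auto. Qed.

Lemma three_soliton_condition (b1 b2 b3 u1 u2 u3 : R) :
  0 < u1 -> 0 < u2 -> 0 < u3 ->
  disp b1 u1 = 0 -> disp b2 u2 = 0 -> disp b3 u3 = 0 ->
  disp (b1 + b2) (u1 * u2) <> 0 -> disp (b1 + b3) (u1 * u3) <> 0 ->
  disp (b2 + b3) (u2 * u3) <> 0 ->
  triple_defect b1 b2 b3 u1 u2 u3 (phase_shift b1 u1 b2 u2)
    (phase_shift b1 u1 b3 u3) (phase_shift b2 u2 b3 u3) = 0.
Proof.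
  intros U1 U2 U3 D1 D2 D3 N12 N13 N23.
  destruct (disp_eq0_param b1 u1 U1 D1) as [w1 [W1 [-> ->]]].
  destruct (disp_eq0_param b2 u2 U2 D2) as [w2 [W2 [-> ->]]].
  destruct (disp_eq0_param b3 u3 U3 D3) as [w3 [W3 [-> ->]]].
  destruct (phase_shift_param w1 w2 W1 W2 N12) as [M12 ->].
  destruct (phase_shift_param w1 w3 W1 W3 N13) as [M13 ->].
  destruct (phase_shift_param w2 w3 W2 W3 N23) as [M23 ->].
  apply triple_defect_param; assumption.
Qed.

Lemma hirota3_soliton (b1 b2 b3 u1 u2 u3 E1 E2 E3 : R) :
  0 < u1 -> 0 < u2 -> 0 < u3 ->
  disp b1 u1 = 0 -> disp b2 u2 = 0 -> disp b3 u3 = 0 ->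
  disp (b1 + b2) (u1 * u2) <> 0 -> disp (b1 + b3) (u1 * u3) <> 0 ->
  disp (b2 + b3) (u2 * u3) <> 0 ->
  hirota3 b1 b2 b3 u1 u2 u3 (phase_shift b1 u1 b2 u2)
    (phase_shift b1 u1 b3 u3) (phase_shift b2 u2 b3 u3) E1 E2 E3 = 0.
Proof.
  intros U1 U2 U3 D1 D2 D3 N12 N13 N23.
  apply hirota3_eq0; try lra; try assumption;
    try (apply pair_defect_phase_shift; assumption).
  apply three_soliton_condition; assumption.
Qed.

Lemma Ppoly_disp (eps : R) (p : vec) :
  Ppoly eps p = disp (vbeta p) (exp (valpha p * eps)).
Proof. unfold Ppoly, disp. rewrite exp_Ropp. reflexivity. Qed.

Lemma exp_valpha_vadd (eps : R) (p q : vec) :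
  exp (valpha (vadd p q) * eps) = exp (valpha p * eps) * exp (valpha q * eps).
Proof. rewrite <- exp_plus. f_equal. unfold vadd, valpha; simpl. ring. Qed.

Lemma exp_valpha_vsub (eps : R) (p q : vec) :
  exp (valpha (vsub p q) * eps) = exp (valpha p * eps) / exp (valpha q * eps).
Proof.
  unfold Rdiv. rewrite <- exp_Ropp, <- exp_plus. f_equal.
  unfold vsub, valpha; simpl. ring.
Qed.

Lemma Acoef_phase_shift (eps : R) (p q : vec) :
  Acoef eps p q = phase_shift (vbeta p) (exp (valpha p * eps))
                              (vbeta q) (exp (valpha q * eps)).
Proof.
  unfold Acoef, phase_shift.
  rewrite !Ppoly_disp, exp_valpha_vadd, exp_valpha_vsub. reflexivity.
Qed.

Lemma f3_soliton3 (eps : R) (p1 p2 p3 : vec) (x s : R) :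
  f3 eps p1 p2 p3 x s =
  soliton3 0 (vbeta p1) (vbeta p2) (vbeta p3)
    (Acoef eps p1 p2) (Acoef eps p1 p3) (Acoef eps p2 p3)
    (exp (theta p1 x s)) (exp (theta p2 x s)) (exp (theta p3 x s)).
Proof. unfold f3, soliton3. rewrite !exp_plus. simpl. ring. Qed.

Lemma soliton3_derive (k : nat) (p1 p2 p3 : vec) (c12 c13 c23 x s : R) :
  derivable_pt_lim (fun s' => soliton3 k (vbeta p1) (vbeta p2) (vbeta p3) c12 c13 c23
      (exp (theta p1 x s')) (exp (theta p2 x s')) (exp (theta p3 x s'))) s
    (soliton3 (S k) (vbeta p1) (vbeta p2) (vbeta p3) c12 c13 c23
      (exp (theta p1 x s)) (exp (theta p2 x s)) (exp (theta p3 x s))).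
Proof.
  apply is_derive_Reals. unfold soliton3, theta.
  auto_derive; [exact I |]. simpl. ring.
Qed.

Lemma exp_theta_shift_plus (eps : R) (p : vec) (x t : R) :
  x <> 0 -> 1 - eps * x <> 0 ->
  exp (theta p (x / (1 - eps * x)) t) = exp (theta p x t) * exp (valpha p * eps).
Proof. intros. rewrite <- exp_plus. f_equal. unfold theta. field. auto. Qed.

Lemma exp_theta_shift_minus (eps : R) (p : vec) (x t : R) :
  x <> 0 -> 1 + eps * x <> 0 ->
  exp (theta p (x / (1 + eps * x)) t) = exp (theta p x t) / exp (valpha p * eps).
Proof.
  intros. unfold Rdiv at 2. rewrite <- exp_Ropp, <- exp_plus. f_equal.
  unfold theta. field. auto.
Qed.

Lemma qToda_f3_hirota3 (eps : R) (p1 p2 p3 : vec) (x : R) (ft ftt : R -> R) (t : R) :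
  x <> 0 -> 1 - eps * x <> 0 -> 1 + eps * x <> 0 ->
  (forall s, derivable_pt_lim (fun s' => f3 eps p1 p2 p3 x s') s (ft s)) ->
  (forall s, derivable_pt_lim ft s (ftt s)) ->
  qToda_bilinear eps (f3 eps p1 p2 p3) ft ftt x t =
  hirota3 (vbeta p1) (vbeta p2) (vbeta p3)
    (exp (valpha p1 * eps)) (exp (valpha p2 * eps)) (exp (valpha p3 * eps))
    (Acoef eps p1 p2) (Acoef eps p1 p3) (Acoef eps p2 p3)
    (exp (theta p1 x t)) (exp (theta p2 x t)) (exp (theta p3 x t)).
Proof.
  intros Hx Hm Hp Hft Hftt.
  set (F k s := soliton3 k (vbeta p1) (vbeta p2) (vbeta p3)
    (Acoef eps p1 p2) (Acoef eps p1 p3) (Acoef eps p2 p3)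
    (exp (theta p1 x s)) (exp (theta p2 x s)) (exp (theta p3 x s))).
  assert (Eft : ft = F 1%nat).
  { apply functional_extensionality. intro s.
    apply (uniqueness_limite (fun s' => f3 eps p1 p2 p3 x s') s); [apply Hft |].
    rewrite (functional_extensionality _ _ (f3_soliton3 eps p1 p2 p3 x)).
    apply soliton3_derive. }
  assert (Eftt : ftt t = F 2%nat t).
  { apply (uniqueness_limite ft t); [apply Hftt |].
    rewrite Eft. apply soliton3_derive. }
  unfold qToda_bilinear, hirota_Dt2, qshift_plus, qshift_minus.
  rewrite Eftt, Eft, !f3_soliton3, !exp_theta_shift_plus, !exp_theta_shift_minus
    by assumption.
  reflexivity.
Qed.

Theorem mainTheorem4 (eps : R) (p1 p2 p3 : vec)
  (h1 : (vbeta p1)^2 = exp (valpha p1 * eps) + exp (- (valpha p1 * eps)) - 2)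
  (h2 : (vbeta p2)^2 = exp (valpha p2 * eps) + exp (- (valpha p2 * eps)) - 2)
  (h3 : (vbeta p3)^2 = exp (valpha p3 * eps) + exp (- (valpha p3 * eps)) - 2)
  (h12 : Ppoly eps (vadd p1 p2) <> 0)
  (h13 : Ppoly eps (vadd p1 p3) <> 0)
  (h23 : Ppoly eps (vadd p2 p3) <> 0) :
  forall (x : R), x <> 0 -> 1 - eps * x <> 0 -> 1 + eps * x <> 0 ->
  forall (ft ftt : R -> R),
    (forall s, derivable_pt_lim (fun s' => f3 eps p1 p2 p3 x s') s (ft s)) ->
    (forall s, derivable_pt_lim ft s (ftt s)) ->
  forall t : R, qToda_bilinear eps (f3 eps p1 p2 p3) ft ftt x t = 0.
Proof.
  intros x Hx Hm Hp ft ftt Hft Hftt t.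
  rewrite qToda_f3_hirota3 by assumption.
  rewrite !Acoef_phase_shift.
  assert (on_curve : forall p, (vbeta p)^2 =
            exp (valpha p * eps) + exp (- (valpha p * eps)) - 2 ->
          disp (vbeta p) (exp (valpha p * eps)) = 0).
  { intros p h. unfold disp. rewrite <- exp_Ropp. lra. }
  rewrite Ppoly_disp, exp_valpha_vadd in h12, h13, h23.
  apply hirota3_soliton; auto using exp_pos.
Qed.
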